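(* Let $n\ge 2$, $d\ge n+1$, and let $f$ be a Perazzo form of degree $d$ in $S$. If $A_f$ has the weak Lefschetz property, then $d\ge 2n$.
   Context: $K$ is an algebraically closed field of characteristic zero. $S=K[x_0,\dots,x_n,u,v]$ and $R=K[y_0,\dots,y_n,U,V]$ acts on $S$ by differentiation ($y_i=\partial/\partial x_i$, $U=\partial/\partial u$, $V=\partial/\partial v$). A Perazzo form of degree $d$ is $f=x_0p_0+x_1p_1+\cdots+x_np_n+g$ where $p_0,\dots,p_n\in K[u,v]_{d-1}$ are linearly independent but algebraically dependent forms and $g\in K[u,v]_d$. $\operatorname{Ann}_R(f)=\{\theta\in R:\theta\circ f=0\}$ and $A_f=R/\operatorname{Ann}_R(f)$ is a graded artinian Gorenstein algebra of socle degree $d$. A graded artinian algebra $A$ has the weak Lefschetz property (WLP) if there is $\ell\in[A]_1$ such that multiplication $\times\ell:[A]_i\to[A]_{i+1}$ has maximal rank (is injective or surjective) for every $i\ge 0$. *)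

From HB Require Import structures.
From mathcomp Require Import all_boot all_order all_algebra.
From mathcomp Require Export mpoly.
Set Implicit Arguments. Unset Strict Implicit. Unset Printing Implicit Defensive.
Import GRing.Theory.
Local Open Scope ring_scope.

(* S = K[x_0..x_n,u,v] is {mpoly K[n.+3]}: variable i <= n is x_i,
   variable n+1 is u, variable n+2 is v.  R = K[y_0..y_n,U,V] is the same
   type {mpoly K[n.+3]}, variable j acting as d/d(variable j) of S. *)

Section Perazzo.
Variables (K : fieldType) (n : nat).

Definition xvar (i : 'I_n.+1) : {mpoly K[n.+3]} := 'X_(inord i).
Definition uv_embed (q : {mpoly K[2]}) : {mpoly K[n.+3]} :=
  comp_mpoly [tuple 'X_(inord n.+1); 'X_(inord n.+2)] q.

Definition act (theta f : {mpoly K[n.+3]}) : {mpoly K[n.+3]} :=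
  \sum_(m <- msupp theta) theta@_m *: mderivm m f.

Definition perazzo_form (d : nat) (f : {mpoly K[n.+3]}) : Prop :=
  exists (p : 'I_n.+1 -> {mpoly K[2]}) (g : {mpoly K[2]}),
    [/\ forall i, p i \is (d.-1).-homog,
        forall c : 'I_n.+1 -> K, \sum_(i < n.+1) c i *: p i = 0 ->
          forall i, c i = 0,
        exists F : {mpoly K[n.+1]},
          F != 0 /\ comp_mpoly [tuple p i | i < n.+1] F = 0,
        g \is d.-homog &
        f = \sum_(i < n.+1) xvar i * uv_embed (p i) + uv_embed g].

(* Here
   [A_f]_i = R_i / (Ann_R(f) ∩ R_i), and injectivity / surjectivity of the
   induced map are written out on representatives. *)
Definition WLP (f : {mpoly K[n.+3]}) : Prop :=
  exists l : {mpoly K[n.+3]}, l \is 1.-homog /\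
    forall i : nat,
      (forall theta, theta \is i.-homog ->
         act (l * theta) f = 0 -> act theta f = 0)
      \/
      (forall eta, eta \is i.+1.-homog ->
         exists theta, theta \is i.-homog /\ act (eta - l * theta) f = 0).

End Perazzo.

From HB Require Import structures.
From mathcomp Require Import all_boot all_order all_algebra.
From mathcomp Require Import mpoly zify.
Set Implicit Arguments. Unset Strict Implicit. Unset Printing Implicit Defensive.
Import GRing.Theory.
Local Open Scope ring_scope.

(* Let l be the Lefschetz form.  On forms in u, v alone, l acts as a
   derivation L in the (u, v)-plane.  The n + 1 binary forms L^(d-n) p_i have
   degree n - 1, so they are linearly dependent: some P = sum_i w_i p_i, nonzero
   by linear independence of the p_i, satisfies L^(d-n) P = 0.  With q the last
   nonzero L^t P, we have L q = 0, and the derivatives M^s q in a direction M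
   transversal to L never vanish before the degree runs out.  Since
   (sum_i w_i y_i) o f = P, the operator theta = (sum_i w_i y_i) L^t M^s has
   theta o f = M^s q <> 0 but (l theta) o f = 0: multiplication by l is not
   injective on [A_f]_j for every d - n <= j <= d - 1.  By the nondegeneracy
   of the apolarity pairing, the same theta in degree d - 1 - i also prevents
   multiplication by l from [A_f]_i from being surjective.  If d < 2n, both
   failures occur at i = (d - 1) / 2. *)

Section Apolarity.
Variables (K : fieldType) (n : nat).
Local Notation S := {mpoly K[n.+3]}.
Implicit Types (a b h : S).

Lemma act_supp_sub a h (s : seq 'X_{1..n.+3}) : uniq s -> {subset msupp a <= s} ->
  act a h = \sum_(m <- s) a@_m *: h^`M[m].
Proof.
move=> us sub; rewrite (bigID (mem (msupp a))) /=.
rewrite [X in _ + X]big1 ?addr0; last by move=> m /memN_msupp_eq0 ->; rewrite scale0r.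
rewrite -big_filter /act; apply: perm_big; apply: uniq_perm.
- exact: msupp_uniq.
- exact: filter_uniq.
by move=> m; rewrite mem_filter; case: (boolP (m \in msupp a)) => //= /sub ->.
Qed.

Lemma act0l h : act 0 h = 0.
Proof. by rewrite /act msupp0 big_nil. Qed.

Lemma actDl a b h : act (a + b) h = act a h + act b h.
Proof.
pose s := undup (msupp a ++ msupp b).
have us : uniq s by exact: undup_uniq.
have sa : {subset msupp a <= s} by move=> m ma; rewrite mem_undup mem_cat ma.
have sb : {subset msupp b <= s} by move=> m mb; rewrite mem_undup mem_cat mb orbT.
have sab : {subset msupp (a + b) <= s} by move=> m /msuppD_le; rewrite mem_undup.
rewrite (act_supp_sub h us sa) (act_supp_sub h us sb) (act_supp_sub h us sab).
by rewrite -big_split; apply: eq_bigr => m _; rewrite mcoeffD scalerDl.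
Qed.

Lemma actZl c a h : act (c *: a) h = c *: act a h.
Proof.
rewrite (act_supp_sub h (msupp_uniq a) (@msuppZ_le _ _ c a)) /act scaler_sumr.
by apply: eq_bigr => m _; rewrite mcoeffZ scalerA.
Qed.

Lemma actBl a b h : act (a - b) h = act a h - act b h.
Proof. by rewrite actDl -scaleN1r actZl scaleN1r. Qed.

Lemma act_suml (I : Type) (r : seq I) (P : pred I) (F : I -> S) h :
  act (\sum_(i <- r | P i) F i) h = \sum_(i <- r | P i) act (F i) h.
Proof. by apply: (big_morph (fun a => act a h)) => [a b|]; rewrite ?actDl ?act0l. Qed.

Lemma actX m h : act 'X_[m] h = h^`M[m].
Proof. by rewrite /act msuppX big_seq1 mcoeffX eqxx scale1r. Qed.

Lemma act_var i h : act 'X_i h = h^`M(i).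
Proof. by rewrite -mderivmU1m -actX. Qed.

Lemma act1 h : act 1 h = h.
Proof. by rewrite -mpolyX0 actX mderivm0m. Qed.

Lemma actDr a h1 h2 : act a (h1 + h2) = act a h1 + act a h2.
Proof. by rewrite /act -big_split; apply: eq_bigr => m _; rewrite mderivmD scalerDr. Qed.

Lemma actZr a c h : act a (c *: h) = c *: act a h.
Proof.
rewrite /act scaler_sumr; apply: eq_bigr => m _.
by rewrite (mderivmZ m c h) !scalerA mulrC.
Qed.

Lemma act0r a : act a 0 = 0.
Proof. by have := actZr a 0 0; rewrite !scale0r. Qed.

Lemma act_sumr (I : Type) (r : seq I) (P : pred I) (F : I -> S) a :
  act a (\sum_(i <- r | P i) F i) = \sum_(i <- r | P i) act a (F i).
Proof. by apply: (big_morph (act a)) => [h1 h2|]; rewrite ?actDr ?act0r. Qed.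

Lemma actM a b h : act (a * b) h = act a (act b h).
Proof.
elim/mpolyind: a h => [|c m p _ _ IH] h; first by rewrite mul0r !act0l.
rewrite mulrDl actDl IH actDl -scalerAl !actZl; congr (_ *: _ + _).
elim/mpolyind: b h {IH} => [|c' m' q _ _ IHq] h; first by rewrite mulr0 !act0l act0r.
rewrite mulrDr actDl IHq actDl actDr -scalerAr !actZl actZr; congr (_ *: _ + _).
by rewrite -mpolyXD !actX addmC mderivmDm.
Qed.

Lemma exists_msupp h : h != 0 -> exists m, m \in msupp h.
Proof.
by rewrite -msupp_eq0; case: (msupp h) => [|m s] //; exists m; exact: mem_head.
Qed.

Lemma dhomog_mderivm d m0 h : h \is d.-homog -> h^`M[m0] \is (d - mdeg m0)%N.-homog.
Proof.
move=> /dhomogP hh; apply/dhomogP => m; rewrite mcoeff_msupp mcoeff_mderivm => nz.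
have : h@_(m0 + m) != 0 by apply: contraNneq nz => ->; rewrite mul0rn.
by rewrite -mcoeff_msupp => /hh <- /=; rewrite mdegD addKn.
Qed.

Lemma dhomog_act j d a h :
  a \is j.-homog -> h \is d.-homog -> act a h \is (d - j)%N.-homog.
Proof.
move=> /dhomogP ha hh; rewrite /act big_seq; apply: rpred_sum => m ma.
by apply: rpredZ; rewrite -(ha m ma); apply: dhomog_mderivm.
Qed.

Lemma dhomog1X a k : a \is 1.-homog -> a ^+ k \is k.-homog.
Proof. by move=> ha; have := dhomogMn k ha; rewrite mul1n. Qed.

Hypothesis charK0 : [pchar K] =i pred0.

Lemma charf0_natr_neq0 k : (k != 0)%N -> (k%:R : K) != 0.
Proof. by move/pcharf0P: charK0 => ->. Qed.

(* The constant term of X^m o h is m! times the coefficient of X^m in h. *)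
Lemma act_supp_neq0 h m : m \in msupp h -> act 'X_[m] h != 0.
Proof.
move=> mh; rewrite actX; apply/eqP => /(congr1 (mcoeff 0%MM)).
rewrite mcoeff_mderivm mcoeff0 addm0 -mulr_natr => /eqP.
rewrite mulf_eq0 => /orP[]; first by rewrite mcoeff_eq0 mh.
apply/negP/charf0_natr_neq0; rewrite -lt0n prodn_gt0 // => i.
by rewrite ffactnn fact_gt0.
Qed.

Lemma exists_mderiv_neq0 h m : m \in msupp h -> m != 0%MM -> exists i, h^`M(i) != 0.
Proof.
move=> mh m0.
have [i mi] : exists i, (0 < m i)%N.
  apply/existsP; apply: contraR m0 => /existsPn m0; apply/eqP/mnmP => i.
  by rewrite mnm0E; move: (m0 i); rewrite lt0n negbK => /eqP.
exists i; apply/eqP => /(congr1 (mcoeff (m - U_(i))%MM)).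
have le : (U_(i) <= m)%MM by apply/mnm_lepP => j; rewrite mnm1E; case: eqP => // <-.
rewrite mcoeff_mderiv submK // mcoeff0 -mulr_natr => /eqP.
rewrite mulf_eq0 => /orP[]; first by rewrite mcoeff_eq0 mh.
exact/negP/charf0_natr_neq0.
Qed.

End Apolarity.

Section XFree.
Variables (K : fieldType) (n : nat).
Local Notation S := {mpoly K[n.+3]}.
Implicit Types (a h : S).

Definition xfree h :=
  forall m, h@_m != 0 -> forall k : 'I_n.+3, (k <= n)%N -> m k = 0%N.

Lemma xfreeD h1 h2 : xfree h1 -> xfree h2 -> xfree (h1 + h2).
Proof.
move=> u1 u2 m; rewrite mcoeffD => nz k kn.
case: (eqVneq h1@_m 0) => [e1|/u1 -> //]; apply: u2 => //.
by move: nz; rewrite e1 add0r.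
Qed.

Lemma xfreeZ c h : xfree h -> xfree (c *: h).
Proof.
move=> u m; rewrite mcoeffZ => nz; apply: u.
by apply: contraNneq nz => ->; rewrite mulr0.
Qed.

Lemma xfree_sum (I : Type) (r : seq I) (P : pred I) (F : I -> S) :
  (forall i, P i -> xfree (F i)) -> xfree (\sum_(i <- r | P i) F i).
Proof.
move=> xF; elim/big_ind: _ => //; last exact: xfreeD.
by move=> m; rewrite mcoeff0 eqxx.
Qed.

Lemma xfree_mderivm m0 h : xfree h -> xfree (h^`M[m0]).
Proof.
move=> u m; rewrite mcoeff_mderivm => nz k kn.
have : h@_(m0 + m) != 0 by apply: contraNneq nz => ->; rewrite mul0rn.
by move/u/(_ k kn)/eqP; rewrite mnmDE addn_eq0 => /andP[_ /eqP].
Qed.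

Lemma xfree_act a h : xfree h -> xfree (act a h).
Proof. by move=> u; apply: xfree_sum => m _; apply/xfreeZ/xfree_mderivm. Qed.

Lemma mderiv_xfree h (k : 'I_n.+3) : xfree h -> (k <= n)%N -> h^`M(k) = 0.
Proof.
move=> u kn; apply/mpolyP => m; rewrite mcoeff_mderiv mcoeff0.
case: (eqVneq h@_(m + U_(k)) 0) => [->|/u/(_ k kn)]; first by rewrite mul0rn.
by rewrite mnmDE mnm1E eqxx addn1.
Qed.

End XFree.

Section UVEmbedding.
Variables (K : fieldType) (n : nat).
Local Notation S := {mpoly K[n.+3]}.
Local Notation embed := (@uv_embed K n).

Definition uvar : 'I_n.+3 := inord n.+1.
Definition vvar : 'I_n.+3 := inord n.+2.

Lemma uvarE : uvar = n.+1 :> nat. Proof. by rewrite /uvar inordK. Qed.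
Lemma vvarE : vvar = n.+2 :> nat. Proof. by rewrite /vvar inordK. Qed.

Lemma uvar_vvar : (uvar == vvar) = false.
Proof. by apply/negbTE/eqP => /(congr1 val); rewrite /= uvarE vvarE; lia. Qed.

Lemma vvar_uvar : (vvar == uvar) = false.
Proof. by rewrite eq_sym uvar_vvar. Qed.

Lemma var_cases (i : 'I_n.+3) : [\/ i = uvar, i = vvar | (i <= n)%N].
Proof.
case: (ltnP n i) => [lt|le]; last by constructor 3.
have : (i == n.+1 :> nat) || (i == n.+2 :> nat) by have := ltn_ord i; lia.
by case/orP => /eqP E; [constructor 1 | constructor 2];
  apply: val_inj; rewrite /= E ?uvarE ?vvarE.
Qed.

Lemma xvar_neq_uvar (k : 'I_n.+3) : (k <= n)%N -> (uvar == k) = false.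
Proof. by move=> kn; apply/negbTE/eqP => E; move: kn; rewrite -E uvarE; lia. Qed.

Lemma xvar_neq_vvar (k : 'I_n.+3) : (k <= n)%N -> (vvar == k) = false.
Proof. by move=> kn; apply/negbTE/eqP => E; move: kn; rewrite -E vvarE; lia. Qed.

Definition uv_mnm (m : 'X_{1..2}) : 'X_{1..n.+3} :=
  (U_(uvar) *+ m ord0 + U_(vvar) *+ m (lift ord0 ord0))%MM.

Lemma uv_mnm_u m : uv_mnm m uvar = m ord0.
Proof. by rewrite mnmDE !mulmnE !mnm1E eqxx vvar_uvar /= mul1n mul0n addn0. Qed.

Lemma uv_mnm_v m : uv_mnm m vvar = m (lift ord0 ord0).
Proof. by rewrite mnmDE !mulmnE !mnm1E eqxx uvar_vvar /= mul1n mul0n. Qed.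

Lemma uv_mnm_x m (k : 'I_n.+3) : (k <= n)%N -> uv_mnm m k = 0%N.
Proof. by move=> kn; rewrite mnmDE !mulmnE !mnm1E xvar_neq_uvar ?xvar_neq_vvar. Qed.

Lemma uv_mnm_inj : injective uv_mnm.
Proof.
move=> m1 m2 E; apply/mnmP => -[[|[|i]] Hi] //.
- have -> : Ordinal Hi = ord0 by apply: val_inj.
  by rewrite -!uv_mnm_u E.
- have -> : Ordinal Hi = lift ord0 ord0 by apply: val_inj.
  by rewrite -!uv_mnm_v E.
Qed.

Lemma mdeg_uv_mnm m : mdeg (uv_mnm m) = mdeg m.
Proof.
rewrite /uv_mnm mdegD !mdegMn !mdeg1 !mul1n [RHS]mdegE.
by rewrite !big_ord_recl big_ord0 addn0.
Qed.

Lemma uv_embedX m : embed ('X_[m] : {mpoly K[2]}) = 'X_[uv_mnm m].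
Proof.
rewrite /uv_embed comp_mpolyX !big_ord_recl big_ord0 mulr1 /=.
by rewrite /uv_mnm mpolyXD -!mpolyXn; congr (_ ^+ _ * _ ^+ _); rewrite /tnth.
Qed.

Lemma uv_embedE q : embed q = \sum_(m <- msupp q) q@_m *: 'X_[uv_mnm m].
Proof. by rewrite /uv_embed comp_mpolyEX; apply: eq_bigr => m _; rewrite -uv_embedX. Qed.

Lemma mcoeff_uv_embed q m : (embed q)@_(uv_mnm m) = q@_m.
Proof.
rewrite uv_embedE; transitivity ((\sum_(m0 <- msupp q) q@_m0 *: 'X_[m0])@_m).
  rewrite !raddf_sum /=; apply: eq_bigr => m' _.
  by rewrite !mcoeffZ !mcoeffX (inj_eq uv_mnm_inj).
by rewrite -mpolyE.
Qed.

Lemma uv_embed_eq0 q : embed q = 0 -> q = 0.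
Proof. by move=> E; apply/mpolyP => m; rewrite -mcoeff_uv_embed E !mcoeff0. Qed.

Lemma xfree_uv_embed q : xfree (embed q).
Proof.
rewrite uv_embedE; apply: xfree_sum => m _; apply: xfreeZ => m'.
rewrite mcoeffX; case: (eqVneq (uv_mnm m) m') => [<- _ k kn|]; last by rewrite eqxx.
exact: uv_mnm_x.
Qed.

Lemma dhomog_uv_embed d q : q \is d.-homog -> embed q \is d.-homog.
Proof.
move=> /dhomogP hq; rewrite uv_embedE big_seq; apply: rpred_sum => m mq.
by apply: rpredZ; rewrite dhomogX /= mdeg_uv_mnm hq.
Qed.

Lemma mdeg_xfree (m : 'X_{1..n.+3}) : (forall k : 'I_n.+3, (k <= n)%N -> m k = 0%N) ->
  mdeg m = (m uvar + m vvar)%N.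
Proof.
move=> mx; rewrite mdegE (bigD1 uvar) // (bigD1 vvar) /=; last by rewrite vvar_uvar.
rewrite big1 ?addn0 // => i /andP[iu iv].
by case: (var_cases i) => [E|E|/mx //]; [move: iu | move: iv]; rewrite E eqxx.
Qed.

Definition uv_mnm_of_deg (D a : nat) : 'X_{1..n.+3} :=
  (U_(uvar) *+ a + U_(vvar) *+ (D - a))%MM.

Lemma xfree_mnmE D (m : 'X_{1..n.+3}) :
  (forall k : 'I_n.+3, (k <= n)%N -> m k = 0%N) ->
  mdeg m = D -> m = uv_mnm_of_deg D (m uvar).
Proof.
move=> mx; rewrite mdeg_xfree // => E; apply/mnmP => i.
rewrite mnmDE !mulmnE !mnm1E.
case: (var_cases i) => [->|->|le].
- by rewrite eqxx vvar_uvar /=; lia.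
- by rewrite eqxx uvar_vvar /=; lia.
by rewrite xvar_neq_uvar // xvar_neq_vvar // mx.
Qed.

(* The forms of degree D in u, v alone have the D + 1 coordinates
   h_(u^a v^(D-a)), so more than D + 1 of them are linearly dependent. *)
Lemma xfree_dhomog_dep (D : nat) (H : 'I_n.+1 -> S) : (D < n)%N ->
  (forall k, xfree (H k)) -> (forall k, H k \is D.-homog) ->
  exists2 w : 'I_n.+1 -> K, exists k, w k != 0 & \sum_k w k *: H k = 0.
Proof.
move=> Dn Hx Hh.
pose A : 'M[K]_(n.+1, D.+1) := \matrix_(k, a) (H k)@_(uv_mnm_of_deg D a).
have rk : \rank (kermx A) != 0%N by rewrite mxrank_ker; have := rank_leq_col A; lia.
have [i nzi] : exists i, row i (kermx A) != 0.
  apply/existsP; apply: contraR rk => /existsPn Hr.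
  rewrite (_ : kermx A = 0) ?mxrank0 //; apply/row_matrixP => i.
  by move: (Hr i); rewrite negbK => /eqP ->; rewrite row0.
pose w k := row i (kermx A) 0 k.
have wA : row i (kermx A) *m A = 0 by rewrite -row_mul mulmx_ker row0.
exists w.
  apply/existsP; apply: contraR nzi => /existsPn Hw; apply/eqP/rowP => k.
  by move: (Hw k); rewrite negbK /w => /eqP ->; rewrite mxE.
apply/mpolyP => m; rewrite mcoeff0.
have sx : xfree (\sum_k w k *: H k) by apply: xfree_sum => k _; apply/xfreeZ.
have sh : \sum_k w k *: H k \is D.-homog by apply: rpred_sum => k _; apply/rpredZ.
case: (eqVneq (\sum_k w k *: H k)@_m 0) => // nz.
have md : mdeg m = D by move/dhomogP: sh; apply; rewrite mcoeff_msupp.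
have mu : (m uvar < D.+1)%N by rewrite ltnS -md mdeg_xfree ?leq_addr //; exact: sx.
move/rowP: wA => /(_ (Ordinal mu)); rewrite !mxE => E.
rewrite (xfree_mnmE (sx m nz) md) raddf_sum /=; apply: etrans E; apply: eq_bigr => k _.
by rewrite mcoeffZ /w !mxE.
Qed.

End UVEmbedding.

Section LinearForms.
Variables (K : fieldType) (n : nat).
Local Notation S := {mpoly K[n.+3]}.

Lemma mnm1_eq (i j : 'I_n.+3) : (U_(i) == U_(j) :> 'X_{1..n.+3})%MM = (i == j).
Proof.
apply/eqP/eqP => [E|-> //]; move/mnmP/(_ i): E; rewrite !mnm1E eqxx.
by case: (eqVneq j i).
Qed.

Lemma dhomog1E (l : S) : l \is 1.-homog -> l = \sum_(i < n.+3) l@_(U_(i)) *: 'X_i.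
Proof.
move=> /dhomogP hl; apply/mpolyP => m; rewrite raddf_sum /=.
case: (boolP (m \in msupp l)) => [ml|nml].
  have /mdeg1P [j /eqP Ej] : mdeg m == 1%N by rewrite hl.
  rewrite (bigD1 j) //= big1 ?addr0; first by rewrite mcoeffZ mcoeffX Ej eqxx mulr1.
  by move=> i ij; rewrite mcoeffZ mcoeffX Ej mnm1_eq (negbTE ij) mulr0.
rewrite (memN_msupp_eq0 nml) big1 // => i _; rewrite mcoeffZ mcoeffX.
by case: eqP => [->|_]; rewrite ?(memN_msupp_eq0 nml) ?mul0r ?mulr0.
Qed.

Lemma act_dhomog1_xfree (l h : S) : l \is 1.-homog -> xfree h ->
  act l h = l@_(U_(uvar n)) *: h^`M(uvar n) + l@_(U_(vvar n)) *: h^`M(vvar n).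
Proof.
move=> hl xh; rewrite {1}(dhomog1E hl) act_suml (bigD1 (uvar n)) //.
rewrite (bigD1 (vvar n)) /=; last by rewrite vvar_uvar.
rewrite big1 ?addr0 ?actZl ?act_var ?addrA // => i /andP[iu iv].
rewrite actZl act_var; case: (var_cases i) => [E|E|le].
- by move: iu; rewrite E eqxx.
- by move: iv; rewrite E eqxx.
by rewrite (mderiv_xfree xh le) scaler0.
Qed.

(* On forms in u, v alone a linear form b y_u + c y_v acts as the derivation
   [ldir b c], normalised to y_u when c = 0; [mdir c] is a direction
   transversal to it. *)
Definition ldir (b c : K) : S :=
  if c != 0 then b *: 'X_(uvar n) + c *: 'X_(vvar n) else 'X_(uvar n).
Definition mdir (c : K) : S := if c != 0 then 'X_(uvar n) else 'X_(vvar n).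

Lemma dhomog_ldir b c : ldir b c \is 1.-homog.
Proof.
rewrite /ldir; case: ifP => _; last by rewrite dhomogX /= mdeg1.
by apply: rpredD; apply: rpredZ; rewrite dhomogX /= mdeg1.
Qed.

Lemma dhomog_mdir c : mdir c \is 1.-homog.
Proof. by rewrite /mdir; case: ifP => _; rewrite dhomogX /= mdeg1. Qed.

Lemma act_ldir b c h : act (ldir b c) h =
  if c != 0 then b *: h^`M(uvar n) + c *: h^`M(vvar n) else h^`M(uvar n).
Proof. by rewrite /ldir; case: ifP => _; rewrite ?actDl ?actZl !act_var. Qed.

Lemma act_dhomog1_ldir (l h : S) : l \is 1.-homog -> xfree h ->
  act (ldir l@_(U_(uvar n)) l@_(U_(vvar n))) h = 0 -> act l h = 0.
Proof.
move=> hl xh; rewrite (act_dhomog1_xfree hl xh) act_ldir.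
by case: ifP => [_ //| /negbFE/eqP -> ->]; rewrite scale0r scaler0 addr0.
Qed.

Lemma ldir_mdir_ann0 (h : S) e b c : [pchar K] =i pred0 ->
  xfree h -> h \is e.-homog -> (0 < e)%N ->
  act (ldir b c) h = 0 -> act (mdir c) h = 0 -> h = 0.
Proof.
move=> charK0 xh /dhomogP hh e0.
have dzero : h^`M(uvar n) = 0 -> h^`M(vvar n) = 0 -> h = 0.
  move=> du dv; apply/eqP; apply: contraT => nz.
  have [m mh] := exists_msupp nz.
  have m0 : m != 0%MM by rewrite -mdeg_eq0 hh //; lia.
  have [i] := exists_mderiv_neq0 charK0 mh m0.
  by case: (var_cases i) => [->|->|le]; rewrite ?du ?dv ?(mderiv_xfree xh le) eqxx.
rewrite act_ldir /mdir; case: ifP => [c0|_]; rewrite act_var; last exact: dzero.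
move=> dl du; apply: dzero => //; move: dl; rewrite du scaler0 add0r => /eqP.
by rewrite scaler_eq0 (negbTE c0) => /eqP.
Qed.

End LinearForms.

Section Transversal.
Variables (K : fieldType) (n : nat) (L M : {mpoly K[n.+3]}).
Hypothesis dhomogM : M \is 1.-homog.
Hypothesis LM_ann0 : forall h e, xfree h -> h \is e.-homog -> (0 < e)%N ->
  act L h = 0 -> act M h = 0 -> h = 0.

Lemma act_transversalX_neq0 h e : xfree h -> h \is e.-homog -> h != 0 ->
  act L h = 0 -> forall s, (s <= e)%N -> act (M ^+ s) h != 0.
Proof.
move=> xh hh nz hL; elim=> [|s IH] lt; first by rewrite expr0 act1.
set h' := act (M ^+ s) h; rewrite exprS actM; apply/eqP => hM.
have xh' : xfree h' by exact: xfree_act.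
have hh' : h' \is (e - s).-homog := dhomog_act (dhomog1X s dhomogM) hh.
have hL' : act L h' = 0 by rewrite /h' -actM mulrC actM hL act0r.
by move/eqP: (IH (ltnW lt)); apply; apply: (LM_ann0 xh' hh' _ hL' hM); lia.
Qed.

End Transversal.

Lemma exists_last_true (P : pred nat) r : P 0%N -> ~~ P r ->
  exists t, [/\ (t < r)%N, P t & ~~ P t.+1].
Proof.
move=> P0; elim: r => [|r IH] Pr; first by rewrite P0 in Pr.
case: (boolP (P r)) => Pr'; first by exists r.
by have [t [tr Pt Pt1]] := IH Pr'; exists t; split => //; apply: ltnW.
Qed.

Section Perazzo.
Variables (K : fieldType) (n d : nat).
Local Notation S := {mpoly K[n.+3]}.
Local Notation embed := (@uv_embed K n).
Variables (p : 'I_n.+1 -> {mpoly K[2]}) (g : {mpoly K[2]}).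
Let f : S := \sum_(i < n.+1) @xvar K n i * embed (p i) + embed g.

Lemma val_inord_x (k : 'I_n.+1) : (inord k : 'I_n.+3) = k :> nat.
Proof. by rewrite inordK //; have := ltn_ord k; lia. Qed.

Lemma inord_x_eq (i k : 'I_n.+1) : ((inord i : 'I_n.+3) == inord k) = (i == k).
Proof.
apply/eqP/eqP => [E|-> //]; apply: val_inj.
by rewrite /= -val_inord_x E val_inord_x.
Qed.

Lemma inord_x_le (k : 'I_n.+1) : ((inord k : 'I_n.+3) <= n)%N.
Proof. by rewrite val_inord_x -ltnS. Qed.

Lemma mderiv_perazzo_x (k : 'I_n.+1) : f^`M(inord k) = embed (p k).
Proof.
have dx0 q : (embed q)^`M(inord k) = 0.
  by apply: mderiv_xfree (inord_x_le k); exact: xfree_uv_embed.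
rewrite /f mderivD dx0 addr0 raddf_sum /= (bigD1 k) //= big1 ?addr0.
  rewrite mderivM dx0 mulr0 addr0 /xvar mderivX mnm1E eqxx scale1r.
  have -> : (U_(inord k : 'I_n.+3) - U_(inord k))%MM = 0%MM.
    by apply/mnmP => j; rewrite mnmBE mnm0E subnn.
  by rewrite mpolyX0 mul1r.
move=> i ik; rewrite mderivM dx0 mulr0 addr0.
by rewrite /xvar mderivX mnm1E inord_x_eq (negbTE ik) scale0r mul0r.
Qed.

Definition xcomb (w : 'I_n.+1 -> K) : S := \sum_(k < n.+1) w k *: 'X_(inord k).

Lemma dhomog_xcomb w : xcomb w \is 1.-homog.
Proof. by apply: rpred_sum => k _; apply: rpredZ; rewrite dhomogX /= mdeg1. Qed.

Lemma act_xcomb w : act (xcomb w) f = embed (\sum_(k < n.+1) w k *: p k).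
Proof.
rewrite act_suml /uv_embed linear_sum; apply: eq_bigr => k _.
by rewrite actZl act_var mderiv_perazzo_x /uv_embed linearZ.
Qed.

Hypothesis charK0 : [pchar K] =i pred0.
Hypothesis n_gt0 : (0 < n)%N.
Hypothesis d_gtn : (n < d)%N.
Hypothesis hp : forall i, p i \is (d.-1).-homog.
Hypothesis p_free : forall c : 'I_n.+1 -> K, \sum_(i < n.+1) c i *: p i = 0 ->
  forall i, c i = 0.

Lemma perazzo_comb_annX (L : S) : L \is 1.-homog ->
  exists2 w : 'I_n.+1 -> K, embed (\sum_k w k *: p k) != 0 &
    act (L ^+ (d - n)) (embed (\sum_k w k *: p k)) = 0.
Proof.
move=> hL; pose H k := act (L ^+ (d - n)) (embed (p k)).
have [w [k0 wk0] Hw] : exists2 w : 'I_n.+1 -> K, exists k, w k != 0 &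
    \sum_k w k *: H k = 0.
  apply: (@xfree_dhomog_dep K n n.-1) => [|k|k]; first by lia.
    exact/xfree_act/xfree_uv_embed.
  have := dhomog_act (dhomog1X (d - n) hL) (dhomog_uv_embed n (hp k)).
  by rewrite (_ : (d.-1 - (d - n) = n.-1)%N) //; lia.
have embedE : embed (\sum_k w k *: p k) = \sum_k w k *: embed (p k).
  by rewrite /uv_embed linear_sum; apply: eq_bigr => k _; rewrite linearZ.
exists w.
  by apply/eqP => /uv_embed_eq0 /p_free/(_ k0)/eqP; apply/negP.
rewrite embedE act_sumr; apply: etrans Hw; apply: eq_bigr => k _.
by rewrite actZr.
Qed.

Lemma perazzo_mul_not_inj (l : S) j : l \is 1.-homog ->
  (d - n <= j)%N -> (0 < j)%N -> (j < d)%N ->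
  exists theta : S, [/\ theta \is j.-homog, act theta f != 0,
    act (l * theta) f = 0 & act theta f \is (d - j)%N.-homog].
Proof.
move=> hl jlo j0 jhi.
pose L := ldir n l@_(U_(uvar n)) l@_(U_(vvar n)); pose M := mdir n l@_(U_(vvar n)).
have hL : L \is 1.-homog by exact: dhomog_ldir.
have hM : M \is 1.-homog by exact: dhomog_mdir.
have [w Pnz PL] := perazzo_comb_annX hL.
set P := embed _ in Pnz PL.
have P0 : act (L ^+ 0) P != 0 by rewrite expr0 act1.
have Pr : ~~ (act (L ^+ (d - n)) P != 0) by rewrite PL eqxx.
have [t [tr Pt Pt1]] := @exists_last_true (fun t => act (L ^+ t) P != 0) _ P0 Pr.
pose q := act (L ^+ t) P.
have qL : act L q = 0 by move: Pt1; rewrite negbK exprS actM => /eqP.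
have xq : xfree q by exact/xfree_act/xfree_uv_embed.
have hq : q \is (d.-1 - t)%N.-homog.
  apply: dhomog_act (dhomog1X t hL) _.
  by apply/dhomog_uv_embed/rpred_sum => k _; apply/rpredZ/hp.
pose s := (j.-1 - t)%N.
have qMs : act (M ^+ s) q != 0.
  apply: (act_transversalX_neq0 hM _ xq hq Pt qL); last by lia.
  by move=> h e; apply: ldir_mdir_ann0.
have thetaE : act (xcomb w * (L ^+ t * M ^+ s)) f = act (M ^+ s) q.
  by rewrite mulrC actM act_xcomb -/P mulrC actM.
exists (xcomb w * (L ^+ t * M ^+ s)); rewrite thetaE; split => //.
- have := dhomogM (dhomog_xcomb w)
    (dhomogM (dhomog1X t hL) (dhomog1X s hM)).
  by rewrite (_ : (1 + (t + s) = j)%N) //; lia.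
- rewrite actM thetaE; apply: act_dhomog1_ldir => //; first exact: xfree_act.
  by rewrite -actM mulrC actM qL act0r.
- rewrite (_ : (d - j = d.-1 - t - s)%N); last by lia.
  exact: dhomog_act (dhomog1X s hM) hq.
Qed.

End Perazzo.

(* X^m o (psi o F) <> 0 for a monomial m of psi o F, whereas
   (l theta) o (psi o F) = 0 for every theta. *)
Lemma act_ann_not_surj (K : fieldType) (n : nat) (F psi l : {mpoly K[n.+3]}) i :
  [pchar K] =i pred0 -> act psi F != 0 -> act psi F \is i.+1.-homog ->
  act (l * psi) F = 0 ->
  ~ (forall eta, eta \is i.+1.-homog ->
       exists theta, theta \is i.-homog /\ act (eta - l * theta) F = 0).
Proof.
move=> charK0 nz hh lpsi surj.
have [m mh] := exists_msupp nz.
have hX : ('X_[m] : {mpoly K[n.+3]}) \is i.+1.-homog.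
  by rewrite dhomogX /=; move/dhomogP: hh => /(_ m mh) ->.
have [theta [_ E]] := surj _ hX.
have /eqP := act_supp_neq0 charK0 mh; apply.
have := congr1 (act psi) E; rewrite act0r -actM mulrBr actBl.
have -> : psi * (l * theta) = theta * (l * psi) by rewrite mulrA mulrC [psi * l]mulrC.
by rewrite (actM theta) lpsi act0r subr0 mulrC actM.
Qed.

Unset Implicit Arguments.

Theorem corollary4p6 (K : closedFieldType) (charK0 : [pchar K] =i pred0)
  (n d : nat) (f : {mpoly K[n.+3]}) :
  (2 <= n)%N -> (n.+1 <= d)%N ->
  perazzo_form d f -> WLP f -> (2 * n <= d)%N.
Proof.
move=> n2 dn [p [g [hp p_free _ _ ->]]] [l [hl wlp]].
rewrite leqNgt; apply/negP => d_lt.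
have [i i_lo i_hi] : exists2 i, (d - n <= i)%N & (2 * i < d)%N.
  by exists ((d - 1) %/ 2)%N; lia.
have n_gt0 : (0 < n)%N by lia.
have not_inj j := @perazzo_mul_not_inj _ _ _ _ g charK0 n_gt0 dn hp p_free l j hl.
case: (wlp i) => [inj|surj].
  have [theta [htheta nz ltheta _]] := not_inj i i_lo ltac:(lia) ltac:(lia).
  by move: nz; rewrite (inj theta htheta ltheta) eqxx.
have [psi [_ nz lpsi hpsi]] := not_inj (d.-1 - i)%N ltac:(lia) ltac:(lia) ltac:(lia).
rewrite (_ : (d - (d.-1 - i) = i.+1)%N) in hpsi; last by lia.
exact: act_ann_not_surj charK0 nz hpsi lpsi surj.
Qed.
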